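(* Let $G=(V,E)$ be a finite simple graph, $C\subseteq V$ such that no vertex of $V\setminus C$ is isolated, and $m\ge 2$ an integer. Let $P_1$ be the convex hull of the integer feasible solutions of the integer program $F_1$ described below. Let $i\in\{2,\dots,m\}$, $k\in\{1,\dots,i\}$, $U\subseteq V$ nonempty with $|U|=p$, $N\subseteq N^p\langle U\rangle$ (possibly empty), and $W=\{w_1,\dots,w_t\}$ a nonempty set of $t$ vertices such that (H1) $W\subseteq N^p\langle U\rangle\setminus N$; (H2) $N\langle w_{r+1}\rangle\subseteq N\langle w_r\rangle$ for all $r=1,\dots,t-1$; (H3) $N\langle v\rangle\subseteq N\langle w_t\rangle$ for all $v\in N$. Let $j_1,\dots,j_{t+1}\in\{1,\dots,i\}$ be integers with $j_1=1$, $j_{t+1}=i$ and $j_r\le j_{r+1}$ for $r=1,\dots,t$. Then the inequality $$\sum_{u\in U}x_{ui}+\sum_{v\in N}y_{vi}+\sum_{r=1}^t\sum_{j=j_r}^{j_{r+1}}y_{w_rj}+\sum_{v\in N^p\langle U\rangle}(p-1)y_{vk}+\sum_{q=1}^{p-1}\sum_{v\in N^q\langle U\rangle}q\,y_{vk}\le p$$ is valid for $P_1$.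
   Context: $N\langle v\rangle = N[v]$ (closed neighborhood) if $v\in C$ and $N\langle v\rangle=N(v)$ (open neighborhood) if $v\notin C$. For nonempty $U\subseteq V$ and integer $r\ge 0$, $N^r\langle U\rangle=\{v\in V: |N\langle v\rangle\cap U|=r\}$. The integer program $F_1$ has binary variables $x_{vi},y_{vi}$ for $v\in V$, $i=1,\dots,m$, constants $x_{u0}=1$ for $u\in V$, objective $\max\sum_{i=1}^m\sum_{v\in V}y_{vi}$ and constraints: $\sum_{v\in V}y_{vi}\le 1$ ($i=1,\dots,m$); $\sum_{i=1}^m y_{vi}\le 1$ ($v\in V$); $x_{ui}\le x_{u(i-1)}$ ($u\in V$, $i=2,\dots,m$); $x_{ui}+\sum_{v\in N\langle u\rangle}y_{vi}\le 1$ ($u\in V$, $i=1,\dots,m$); $y_{vi}\le\sum_{u\in N\langle v\rangle}(x_{u(i-1)}-x_{ui})$ ($v\in V$, $i=2,\dots,m$); $x_{vi},y_{vi}\in\{0,1\}$. *)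

From mathcomp Require Import all_boot all_order all_algebra.
Set Implicit Arguments. Unset Strict Implicit. Unset Printing Implicit Defensive.
Import Order.TTheory GRing.Theory Num.Theory.
Local Open Scope ring_scope.

Section Defs.
Variable V : finType.

Definition simple_graph (e : rel V) : Prop := symmetric e /\ irreflexive e.

Definition nbo (e : rel V) (v : V) : {set V} := [set u | e v u].

Definition nbC (e : rel V) (C : {set V}) (v : V) : {set V} :=
  if v \in C then v |: nbo e v else nbo e v.

Definition Npow (e : rel V) (C : {set V}) (r : nat) (U : {set V}) : {set V} :=
  [set v | #|nbC e C v :&: U| == r].

(* integer feasible solutions of F_1: variables x_{vi}, y_{vi} for
   v in V, 1 <= i <= m (values at other indices are irrelevant);
   x_{u0} = 1 is a constant, implemented by xf below. *)
Definition feasible (e : rel V) (C : {set V}) (m : nat)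
    (X Y : V -> nat -> int) : Prop :=
  let xf u i := if i == 0%N then 1 else X u i in
  (forall v i, (1 <= i <= m)%N -> X v i = 0 \/ X v i = 1) /\
  (forall v i, (1 <= i <= m)%N -> Y v i = 0 \/ Y v i = 1) /\
  (forall i, (1 <= i <= m)%N -> \sum_(v : V) Y v i <= 1) /\
  (forall v, \sum_(1 <= i < m.+1) Y v i <= 1) /\
  (forall u i, (2 <= i <= m)%N -> xf u i <= xf u i.-1) /\
  (forall u i, (1 <= i <= m)%N -> xf u i + \sum_(v in nbC e C u) Y v i <= 1) /\
  (forall v i, (2 <= i <= m)%N ->
     Y v i <= \sum_(u in nbC e C v) (xf u i.-1 - xf u i)).

Definition in_P1 (R : realFieldType) (e : rel V) (C : {set V}) (m : nat)
    (x y : V -> nat -> R) : Prop :=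
  exists (n : nat) (lam : 'I_n -> R) (X Y : 'I_n -> V -> nat -> int),
    [/\ forall l, feasible e C m (X l) (Y l),
        forall l, 0 <= lam l,
        \sum_(l < n) lam l = 1,
        forall v i, (1 <= i <= m)%N -> x v i = \sum_(l < n) lam l * (X l v i)%:~R
      & forall v i, (1 <= i <= m)%N -> y v i = \sum_(l < n) lam l * (Y l v i)%:~R].

End Defs.

From mathcomp Require Import all_boot all_order all_algebra zify.
Import Order.TTheory GRing.Theory Num.Theory.
Local Open Scope ring_scope.

(* Read an integer point of F_1 as a domination sequence: Y v n = 1 when v is
   chosen at step n, X u n = 1 when u is still undominated after step n.  A
   chosen vertex dominates N<v> from then on, and a vertex chosen at step n > 1
   must footprint a vertex that was undominated at step n - 1.
   Split the left-hand side into A (the x-terms), S (the y-terms of N and of the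
   windows of w_1, ..., w_t) and D (the step-k terms).  At most one vertex v is
   chosen at step k; it contributes min(|N<v> ∩ U|, p - 1) to D and dominates
   N<v> ∩ U by step i, so D <= p - 1 and A + D <= p.  Since
   N<w_1> ⊇ ... ⊇ N<w_t> ⊇ N<v> (v in N) and the windows are consecutive, a
   vertex chosen in a later window would have nothing left to footprint; hence
   S <= 1, and S = 1 means that a vertex with U ⊆ N<v> was chosen by step i,
   which forces A = 0.  Validity for P_1 follows by linearity. *)

Lemma sumr_le1_pairwise (R : numDomainType) (I : eqType) (s : seq I) (F : I -> R) :
  uniq s -> {in s, forall x, 0 <= F x <= 1} ->
  {in s &, forall x y, x != y -> F x = 0 \/ F y = 0} ->
  \sum_(x <- s) F x <= 1.
Proof.
elim: s => [|a s IH]; first by rewrite big_nil.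
rewrite /= => /andP [a_s s_uniq] F01 Fexcl; rewrite big_cons.
have sub_as x : x \in s -> x \in a :: s by rewrite inE => ->; rewrite orbT.
have [->|Fa_neq0] := eqVneq (F a) 0.
  rewrite add0r; apply: IH => // [x /sub_as/F01 //|x y /sub_as xs /sub_as ys].
  exact: Fexcl.
rewrite big1_seq ?addr0; first by have /andP [] := F01 a (mem_head a s).
move=> x /andP [_ xs]; have ax : a != x by apply: contraNneq a_s => ->.
have [/eqP|//] := Fexcl a x (mem_head a s) (sub_as x xs) ax.
by rewrite (negbTE Fa_neq0).
Qed.

Lemma sum01_neq0 (I : eqType) (s : seq I) (P : pred I) (F : I -> int) :
  {in s, forall x, F x = 0 \/ F x = 1} -> \sum_(x <- s | P x) F x != 0 ->
  exists2 x, x \in s & P x /\ F x = 1.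
Proof.
move=> F01; rewrite big_seq_cond psumr_neq0 => [|x /andP [xs _]]; last by case: (F01 x xs) => ->.
move=> /hasP [x xs /andP [/andP [_ Px] Fx]].
by exists x => //; split => //; case: (F01 x xs) Fx => ->.
Qed.

Section Neighbourhoods.
Context {V : finType} {e : rel V} {C : {set V}}.

Lemma nbC_sym (u v : V) : simple_graph e -> (u \in nbC e C v) = (v \in nbC e C u).
Proof.
case=> e_sym _; rewrite /nbC /nbo.
have [->|uv] := eqVneq u v; first by [].
by case: (v \in C); case: (u \in C); rewrite !inE ?(negbTE uv) ?(eq_sym v u) ?(negbTE uv) e_sym.
Qed.

Lemma Npow_card_subset (U : {set V}) v :
  v \in Npow e C #|U| U -> U \subset nbC e C v.
Proof.
rewrite inE => /eqP cardI.
have /eqP <- : nbC e C v :&: U == U by rewrite eqEcard subsetIr cardI /=.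
exact: subsetIl.
Qed.

End Neighbourhoods.

Section FeasibleSolution.
Context {V : finType} {e : rel V} {C : {set V}} {m : nat} {X Y : V -> nat -> int}.
Hypotheses (e_simple : simple_graph e) (XY_feasible : feasible e C m X Y).
Local Notation nb := (nbC e C).

Lemma feasible_X01 v n : (1 <= n <= m)%N -> X v n = 0 \/ X v n = 1.
Proof. by case: XY_feasible => X01 _; apply: X01. Qed.

Lemma feasible_Y01 v n : (1 <= n <= m)%N -> Y v n = 0 \/ Y v n = 1.
Proof. by case: XY_feasible => _ [Y01 _]; apply: Y01. Qed.

Lemma feasible_Y_ge0 v n : (1 <= n <= m)%N -> 0 <= Y v n.
Proof. by move/(feasible_Y01 v) => [|] ->. Qed.

Lemma sum_Y_step_le1 n : (1 <= n <= m)%N -> \sum_v Y v n <= 1.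
Proof. by case: XY_feasible => _ [_ [step_le1 _]]; apply: step_le1. Qed.

Lemma sum_Y_window_le1 v a b : (1 <= a)%N -> (b <= m)%N ->
  \sum_(a <= n < b.+1) Y v n <= 1.
Proof.
move=> a_ge1 b_le_m; case: XY_feasible => _ [_ [_ [vertex_le1 _]]].
have [ab|ba] := leqP a b.+1; last by rewrite big_geq //; lia.
have Yge0 n : (1 <= n < m.+1)%N -> 0 <= Y v n by move=> n_range; apply: feasible_Y_ge0; lia.
apply: le_trans (vertex_le1 v).
rewrite (big_cat_nat (_ : 1 <= a)%N) 1?(big_cat_nat (_ : a <= b.+1)%N (_ : b.+1 <= m.+1)%N) //=;
  try lia.
rewrite addrCA lerDl addr_ge0 // big_nat_cond sumr_ge0 // => n /andP [n_range _]; apply: Yge0; lia.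
Qed.

Lemma X_nonincreasing u a b : (1 <= a)%N -> (a <= b <= m)%N -> X u b <= X u a.
Proof.
move=> a_ge1 /andP [ab b_le_m]; case: XY_feasible => _ [_ [_ [_ [X_step _]]]].
elim: b ab b_le_m => [|b IH]; first by lia.
rewrite leq_eqVlt => /orP [/eqP <- //|ab] b_lt_m.
apply: le_trans (IH ab (ltnW b_lt_m)).
by have := X_step u b.+1; rewrite /= ifN; [apply; lia | lia].
Qed.

Lemma X_dominated v u a n : (1 <= a)%N -> (a <= n <= m)%N ->
  Y v a = 1 -> u \in nb v -> X u n = 0.
Proof.
move=> a_ge1 a_n_m Yva uv; case: XY_feasible => _ [_ [_ [_ [_ [dom _]]]]].
have a_range : (1 <= a <= m)%N by lia.
have := dom u a a_range; rewrite /= ifN -?lt0n // (bigD1 v) /= ?Yva; last by rewrite -nbC_sym.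
have : 0 <= \sum_(z in nb u | z != v) Y z a by apply: sumr_ge0 => z _; apply: feasible_Y_ge0.
move: (\sum_(_ in _ | _) _) => rest rest_ge0 Xua_le0.
have n_range : (1 <= n <= m)%N by lia.
have := X_nonincreasing u _ _ a_ge1 a_n_m.
have [->|->] // := feasible_X01 u n n_range.
by have [|] := feasible_X01 u a a_range; lia.
Qed.

Lemma chosen_footprint v n : (2 <= n <= m)%N -> Y v n = 1 ->
  exists2 u, u \in nb v & X u n.-1 = 1.
Proof.
move=> n_range Yvn; case: XY_feasible => _ [_ [_ [_ [_ [_ footprint]]]]].
have [n1_neq0 n_neq0] : (n.-1 == 0)%N = false /\ (n == 0)%N = false by lia.
have := footprint v n n_range; rewrite /= Yvn n1_neq0 n_neq0.
have [/existsP [u /andP [uv /eqP Xu]] _|/existsPn none] :=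
  boolP [exists u in nb v, X u n.-1 == 1]; first by exists u.
move=> sum_ge1; suff sum_le0 : \sum_(u in nb v) (X u n.-1 - X u n) <= 0.
  by have := le_trans sum_ge1 sum_le0.
apply: sumr_le0 => u uv; have := none u; rewrite uv /= => /eqP Xu1.
have [n1_range n_range'] : (1 <= n.-1 <= m)%N /\ (1 <= n <= m)%N by lia.
have [->|Xn1] := feasible_X01 u n.-1 n1_range; last by rewrite Xn1 in Xu1.
by have [->|->] := feasible_X01 u n n_range'.
Qed.

Lemma chosen_unique v z n : (1 <= n <= m)%N -> Y v n = 1 -> Y z n = 1 -> v = z.
Proof.
move=> n_range Yvn Yzn; apply/eqP/negP => /negP vz.
have := sum_Y_step_le1 n n_range; rewrite (bigD1 v) //= (bigD1 z) 1?eq_sym //= Yvn Yzn.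
have : 0 <= \sum_(u | (u != v) && (u != z)) Y u n by apply: sumr_ge0 => u _; apply: feasible_Y_ge0.
by move: (\sum_(_ | _) _) => rest; lia.
Qed.

(* If a < b, z footprints at step b a vertex of N<z>, which lies in N<v> and is
   therefore dominated since step a. *)
Lemma chosen_nested v z a b : (1 <= a)%N -> (a <= b <= m)%N ->
  Y v a = 1 -> Y z b = 1 -> nb z \subset nb v -> a = b /\ v = z.
Proof.
move=> a_ge1 a_b_m Yva Yzb zv; have [ab|ba] := ltnP a b; last first.
  have ab : a = b by lia.
  by subst b; split => //; apply: chosen_unique Yva Yzb; lia.
have [b_range a_b1_m] : (2 <= b <= m)%N /\ (a <= b.-1 <= m)%N by lia.
have [u uz Xu] := chosen_footprint z b b_range Yzb.
by rewrite (X_dominated v u a b.-1 a_ge1 a_b1_m Yva (subsetP zv u uz)) in Xu.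
Qed.

Lemma weighted_step_sum n (f : V -> int) : (1 <= n <= m)%N ->
  \sum_v Y v n * f v = 0 \/ exists2 v, Y v n = 1 & \sum_z Y z n * f z = f v.
Proof.
move=> n_range; have [/existsP [v /eqP Yvn]|/existsPn none] := boolP [exists v, Y v n == 1].
  right; exists v; rewrite // (bigD1 v) //= Yvn mul1r big1 ?addr0 // => z zv.
  have [->|Yzn] := feasible_Y01 z n n_range; first by rewrite mul0r.
  by rewrite (chosen_unique z v n n_range Yzn Yvn) eqxx in zv.
left; apply: big1 => v _; have /negP := none v.
by case: (feasible_Y01 v n n_range) => -> //; rewrite mul0r.
Qed.

End FeasibleSolution.

Definition ineq_lhs {V : finType} (e : rel V) (C : {set V}) (i k : nat) (U N : {set V})
    (t : nat) (w : nat -> V) (j : nat -> nat) {R : pzRingType} (x y : V -> nat -> R) : R :=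
  \sum_(u in U) x u i
  + \sum_(v in N) y v i
  + \sum_(1 <= r < t.+1) \sum_(j r <= jj < (j r.+1).+1) y (w r) jj
  + \sum_(v in Npow e C #|U| U) (#|U| - 1)%:R * y v k
  + \sum_(1 <= q < #|U|) \sum_(v in Npow e C q U) q%:R * y v k.

Section InequalityLhs.
Context {V : finType} {e : rel V} {C : {set V}} {i k : nat} {U N : {set V}}.
Context {t : nat} {w : nat -> V} {j : nat -> nat}.
Local Notation lhs := (ineq_lhs e C i k U N t w j).

Lemma raddf_ineq_lhs {R S : pzRingType} (f : {additive R -> S}) (x y : V -> nat -> R) :
  f (lhs x y) = lhs (fun v n => f (x v n)) (fun v n => f (y v n)).
Proof.
rewrite /ineq_lhs !raddfD !raddf_sum; congr (_ + _ + _ + _ + _).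
- by apply: eq_bigr => r _; rewrite raddf_sum.
- by apply: eq_bigr => v _; rewrite raddfMnat.
- by apply: eq_bigr => q _; rewrite raddf_sum; apply: eq_bigr => v _; rewrite raddfMnat.
Qed.

Lemma ineq_lhs_convex (R : comPzRingType) n (lam : 'I_n -> R) (x y : 'I_n -> V -> nat -> R) :
  lhs (fun v q => \sum_(l < n) lam l * x l v q) (fun v q => \sum_(l < n) lam l * y l v q)
  = \sum_(l < n) lam l * lhs (x l) (y l).
Proof.
have sum_lincomb (I : Type) (s : seq I) (P : pred I) (g : 'I_n -> I -> R) :
    \sum_(z <- s | P z) \sum_(l < n) lam l * g l z = \sum_(l < n) lam l * \sum_(z <- s | P z) g l z.
  by rewrite exchange_big; apply: eq_bigr => l _; rewrite mulr_sumr.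
have scaled_lincomb c (I : Type) (s : seq I) (P : pred I) (g : 'I_n -> I -> R) :
    \sum_(z <- s | P z) c * \sum_(l < n) lam l * g l z
    = \sum_(l < n) lam l * \sum_(z <- s | P z) c * g l z.
  rewrite -sum_lincomb; apply: eq_bigr => z _; rewrite mulr_sumr.
  by apply: eq_bigr => l _; rewrite mulrCA.
rewrite /ineq_lhs; under [RHS]eq_bigr do rewrite !mulrDr.
rewrite !big_split /= !sum_lincomb scaled_lincomb; congr (_ + _ + _ + _ + _).
- by under eq_bigr do rewrite sum_lincomb; rewrite sum_lincomb.
- by under eq_bigr do rewrite scaled_lincomb; rewrite sum_lincomb.
Qed.

Lemma eq_ineq_lhs (R : pzRingType) (x y x' y' : V -> nat -> R) :
  (1 <= k <= i)%N -> (forall r, (1 <= r <= t.+1)%N -> (1 <= j r <= i)%N) ->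
  (forall v n, (1 <= n <= i)%N -> x v n = x' v n) ->
  (forall v n, (1 <= n <= i)%N -> y v n = y' v n) ->
  lhs x y = lhs x' y'.
Proof.
move=> k_range j_range xx' yy'; have i_range : (1 <= i <= i)%N by lia.
rewrite /ineq_lhs; congr (_ + _ + _ + _ + _).
- by apply: eq_bigr => u _; rewrite xx'.
- by apply: eq_bigr => v _; rewrite yy'.
- rewrite !big_nat; apply: eq_bigr => r r_range; rewrite !big_nat.
  apply: eq_bigr => n n_range; apply: yy'.
  by have := j_range r; have := j_range r.+1; lia.
- by apply: eq_bigr => v _; rewrite yy'.
- by apply: eq_bigr => q _; apply: eq_bigr => v _; rewrite yy'.
Qed.

End InequalityLhs.

Section IntegralSolution.
Context {V : finType} {e : rel V} {C : {set V}} {m i k : nat} {X Y : V -> nat -> int}.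
Context {U N : {set V}} {t : nat} {w : nat -> V} {j : nat -> nat}.
Hypotheses (e_simple : simple_graph e) (XY_feasible : feasible e C m X Y).
Hypotheses (i_range : (2 <= i <= m)%N) (k_range : (1 <= k <= i)%N).
Hypotheses (U_neq0 : U != set0) (N_sub : N \subset Npow e C #|U| U).
Hypothesis w_inj : forall r s, (1 <= r <= t)%N -> (1 <= s <= t)%N -> w r = w s -> r = s.
Hypothesis w_out : forall r, (1 <= r <= t)%N -> w r \in Npow e C #|U| U :\: N.
Hypothesis nb_w_step : forall r, (1 <= r < t)%N -> nbC e C (w r.+1) \subset nbC e C (w r).
Hypothesis nb_N_sub : forall v, v \in N -> nbC e C v \subset nbC e C (w t).
Hypothesis j_range : forall r, (1 <= r <= t.+1)%N -> (1 <= j r <= i)%N.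
Hypothesis j_step : forall r, (1 <= r <= t)%N -> (j r <= j r.+1)%N.

Local Notation p := #|U|.
Local Notation nb := (nbC e C).
Let A := \sum_(u in U) X u i.
Let B := \sum_(v in N) Y v i.
Let W r := \sum_(j r <= n < (j r.+1).+1) Y (w r) n.
Let S := B + \sum_(1 <= r < t.+1) W r.
Let D := \sum_(v in Npow e C p U) (p - 1)%:R * Y v k
  + \sum_(1 <= q < p) \sum_(v in Npow e C q U) q%:R * Y v k.

Lemma nb_w_antitone r s : (1 <= r <= s)%N -> (s <= t)%N -> nb (w s) \subset nb (w r).
Proof.
move=> r_s s_le_t.
have homo := @homo_leq_in _ [pred n | 1 <= n <= t]%N (fun n => nb (w n))
  (fun S T => T \subset S) (@subxx _ _) (fun _ _ _ S T => subset_trans T S).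
apply: homo; rewrite ?inE /=; try lia.
- by move=> a b; rewrite !inE => a_range b_range c c_range; rewrite inE; lia.
- by move=> a; rewrite !inE => a_range a1_range; apply: nb_w_step; lia.
Qed.

Lemma j_nondecreasing r s : (1 <= r <= s)%N -> (s <= t.+1)%N -> (j r <= j s)%N.
Proof.
move=> r_s s_le_t; have homo := @homo_leq_in _ [pred n | 1 <= n <= t.+1]%N j leq leqnn
  (fun _ _ _ => @leq_trans _ _ _).
apply: homo; rewrite ?inE /=; try lia.
- by move=> a b; rewrite !inE => a_range b_range c c_range; rewrite inE; lia.
- by move=> a; rewrite !inE => a_range a1_range; apply: j_step; lia.
Qed.

Lemma W_bounds r : (1 <= r <= t)%N -> 0 <= W r <= 1.
Proof.
move=> r_range; have [jr jr1] := (j_range r ltac:(lia), j_range r.+1 ltac:(lia)).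
rewrite /W (sum_Y_window_le1 XY_feasible) ?andbT; [|lia|lia].
by rewrite big_nat sumr_ge0 // => n n_range; apply: (feasible_Y_ge0 XY_feasible); lia.
Qed.

Lemma window_chosen r : (1 <= r <= t)%N -> W r != 0 ->
  exists2 a, (j r <= a <= j r.+1)%N & Y (w r) a = 1.
Proof.
move=> r_range /sum01_neq0 [n|n]; rewrite mem_index_iota => n_range.
  by apply: (feasible_Y01 XY_feasible); have := j_range r; have := j_range r.+1; lia.
by move=> [_ Yn]; exists n => //; lia.
Qed.

Lemma windows_exclusive r s : (1 <= r < s)%N -> (s <= t)%N -> W r = 0 \/ W s = 0.
Proof.
move=> r_s s_le_t.
have [->|Wr] := eqVneq (W r) 0; [by left | have [->|Ws] := eqVneq (W s) 0; [by right | exfalso]].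
have [a a_range Yra] := window_chosen r ltac:(lia) Wr.
have [b b_range Ysb] := window_chosen s ltac:(lia) Ws.
have j_rs : (j r.+1 <= j s)%N by apply: j_nondecreasing; lia.
have [a_ge1 b_le_i] : (1 <= a)%N /\ (b <= i)%N.
  by have := j_range r; have := j_range s.+1; lia.
have [_ wr_ws] := chosen_nested e_simple XY_feasible (w r) (w s) a b a_ge1 ltac:(lia) Yra Ysb
  (nb_w_antitone r s ltac:(lia) s_le_t).
by have := w_inj r s ltac:(lia) ltac:(lia) wr_ws; lia.
Qed.

Lemma sum_W_le1 : \sum_(1 <= r < t.+1) W r <= 1.
Proof.
apply: sumr_le1_pairwise => [|r|r s]; rewrite ?iota_uniq ?mem_index_iota // => r_range.
  by apply: W_bounds; lia.
move=> s_range /eqP rs; have [r_s|s_r] := ltnP r s.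
  by apply: windows_exclusive; lia.
by have [|] := windows_exclusive s r ltac:(lia) ltac:(lia); [right|left].
Qed.

Lemma A_eq0 v a : v \in Npow e C p U -> (1 <= a <= i)%N -> Y v a = 1 -> A = 0.
Proof.
move=> v_full a_range Yva; apply: big1 => u uU.
apply: (X_dominated e_simple XY_feasible v u a i _ _ Yva); try lia.
exact: subsetP (Npow_card_subset _ _ v_full) u uU.
Qed.

Lemma B_chosen : B != 0 -> exists2 v, v \in N & Y v i = 1.
Proof.
move=> /sum01_neq0 [v _|v _ [vN Yvi]]; last by exists v.
by apply: (feasible_Y01 XY_feasible); lia.
Qed.

Lemma N_excludes_windows : B != 0 -> \sum_(1 <= r < t.+1) W r = 0.
Proof.
move=> /B_chosen [v vN Yvi].
rewrite big_nat; apply: big1 => r r_range; apply/eqP/negP => /negP.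
move=> /(window_chosen r ltac:(lia)) [a a_range Yra].
have [a_ge1 a_le_i] : (1 <= a)%N /\ (a <= i)%N by have := j_range r; have := j_range r.+1; lia.
have nb_v_wr : nb v \subset nb (w r).
  by apply: subset_trans (nb_N_sub v vN) (nb_w_antitone r t _ _); lia.
have [_ wr_v] := chosen_nested e_simple XY_feasible (w r) v a i a_ge1 ltac:(lia) Yra Yvi nb_v_wr.
by have := w_out r ltac:(lia); rewrite wr_v inE vN.
Qed.

Lemma window_A_eq0 r : (1 <= r <= t)%N -> W r != 0 -> A = 0.
Proof.
move=> r_range /(window_chosen r r_range) [a a_range Yra].
have /setDP [wr_full _] := w_out r r_range.
by apply: (A_eq0 (w r) a wr_full _ Yra); have := j_range r; have := j_range r.+1; lia.
Qed.

Lemma B_bounds : 0 <= B <= 1.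
Proof.
have i_range' : (1 <= i <= m)%N by lia.
have Y_ge0 v : 0 <= Y v i by apply: (feasible_Y_ge0 XY_feasible).
rewrite sumr_ge0 //; apply: le_trans (sum_Y_step_le1 XY_feasible i i_range').
by rewrite [leRHS](bigID (mem N)) /= lerDl sumr_ge0.
Qed.

Lemma S_bounds : 0 <= S <= 1.
Proof.
have W_ge0 : 0 <= \sum_(1 <= r < t.+1) W r.
  by rewrite big_nat sumr_ge0 // => r r_range; have /andP [] := W_bounds r r_range.
rewrite /S; have [->|/N_excludes_windows ->] := eqVneq B 0; last by rewrite addr0 B_bounds.
by rewrite add0r W_ge0 sum_W_le1.
Qed.

Lemma S_neq0_A_eq0 : S != 0 -> A = 0.
Proof.
have [B0|/B_chosen [v vN Yvi] _] := eqVneq B 0; last first.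
  by apply: (A_eq0 v i (subsetP N_sub v vN)); lia.
rewrite /S B0 add0r => /sum01_neq0 [r|r]; rewrite mem_index_iota => r_range.
  by have := W_bounds r r_range; lia.
by move=> [_ Wr1]; apply: (window_A_eq0 r r_range); rewrite Wr1.
Qed.

Lemma D_weighted : D = \sum_v Y v k * (minn #|nb v :&: U| (p - 1))%:R.
Proof.
have D2E q : \sum_(v in Npow e C q U) q%:R * Y v k
    = \sum_v (if #|nb v :&: U| == q then q%:R * Y v k else 0).
  by rewrite big_mkcond; apply: eq_bigr => v _; rewrite inE.
rewrite /D big_mkcond (eq_bigr _ (fun q _ => D2E q)) exchange_big -big_split /=.
apply: eq_bigr => v _; rewrite inE -big_mkcond (eq_bigl (pred1 #|nb v :&: U|)) => [|q]; last first.
  by rewrite /= eq_sym.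
rewrite big_nat1_eq; have : (#|nb v :&: U| <= p)%N by rewrite subset_leq_card ?subsetIr.
set qv := #|nb v :&: U| => qv_le_p.
case: eqP => [qv_p|qv_p]; case: ifP => qv_range.
- by move: qv_range; rewrite qv_p ltnn andbF.
- by rewrite addr0 mulrC; congr (_ * _%:R); lia.
- by rewrite add0r mulrC; congr (_ * _%:R); lia.
- by rewrite addr0 (_ : minn qv (p - 1) = 0)%N ?mulr0 //; lia.
Qed.

Lemma D_le : D <= (p - 1)%:R.
Proof.
have k_range' : (1 <= k <= m)%N by lia.
rewrite D_weighted; have [->|[v _ ->]] // := weighted_step_sum XY_feasible k
  (fun v => (minn #|nb v :&: U| (p - 1))%:R) k_range'.
by rewrite ler_nat geq_minr.
Qed.

Lemma sum_X_le_card (Z : {set V}) : \sum_(u in Z) X u i <= #|Z|%:R.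
Proof.
rewrite -sumr_const; apply: ler_sum => u _.
by have [->|->] := feasible_X01 XY_feasible u i ltac:(lia).
Qed.

Lemma A_add_D_le : A + D <= p%:R.
Proof.
have k_range' : (1 <= k <= m)%N by lia.
rewrite D_weighted; have [->|[v Yvk ->]] := weighted_step_sum XY_feasible k
  (fun v => (minn #|nb v :&: U| (p - 1))%:R) k_range'.
  by rewrite addr0 sum_X_le_card.
rewrite /A (big_setID (nb v)) /= big1 => [|u /setIP [_ u_nbv]]; last first.
  by apply: (X_dominated e_simple XY_feasible v u k i _ _ Yvk u_nbv); lia.
rewrite add0r; apply: le_trans (lerD (sum_X_le_card (U :\: nb v)) (lexx _)) _.
rewrite cardsD setIC -natrD ler_nat.
have : (minn #|nb v :&: U| (p - 1) <= #|nb v :&: U| <= p)%N.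
  by rewrite geq_minl subset_leq_card ?subsetIr.
lia.
Qed.

Lemma ineq_lhs_int_le : ineq_lhs e C i k U N t w j X Y <= p%:R.
Proof.
have -> : ineq_lhs e C i k U N t w j X Y = A + S + D by rewrite /ineq_lhs -!addrA.
have [->|/S_neq0_A_eq0 ->] := eqVneq S 0; first by rewrite addr0 A_add_D_le.
have p_gt0 : (0 < p)%N by rewrite card_gt0.
have /andP [_ S_le1] := S_bounds.
rewrite add0r; apply: le_trans (lerD S_le1 D_le) _.
by rewrite addrC natr1 ler_nat; lia.
Qed.

End IntegralSolution.

Theorem theorem2 (R : realFieldType) (V : finType) (e : rel V) (C : {set V})
    (m : nat) (i k : nat) (U N : {set V}) (t : nat) (w : nat -> V) (j : nat -> nat) :
  simple_graph e ->
  (forall v, v \notin C -> exists u, e v u) ->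
  (2 <= m)%N ->
  (2 <= i <= m)%N ->
  (1 <= k <= i)%N ->
  U != set0 ->
  N \subset Npow e C #|U| U ->
  (1 <= t)%N ->
  (forall r s, (1 <= r <= t)%N -> (1 <= s <= t)%N -> w r = w s -> r = s) ->
  (* H1 *) (forall r, (1 <= r <= t)%N -> w r \in Npow e C #|U| U :\: N) ->
  (* H2 *) (forall r, (1 <= r < t)%N -> nbC e C (w r.+1) \subset nbC e C (w r)) ->
  (* H3 *) (forall v, v \in N -> nbC e C v \subset nbC e C (w t)) ->
  (forall r, (1 <= r <= t.+1)%N -> (1 <= j r <= i)%N) ->
  j 1%N = 1%N -> j t.+1 = i ->
  (forall r, (1 <= r <= t)%N -> (j r <= j r.+1)%N) ->
  forall x y : V -> nat -> R, in_P1 e C m x y ->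
    \sum_(u in U) x u i
    + \sum_(v in N) y v i
    + \sum_(1 <= r < t.+1) \sum_(j r <= jj < (j r.+1).+1) y (w r) jj
    + \sum_(v in Npow e C #|U| U) (#|U| - 1)%:R * y v k
    + \sum_(1 <= q < #|U|) \sum_(v in Npow e C q U) q%:R * y v k
    <= #|U|%:R.
Proof.
move=> e_simple _ _ i_range k_range U_neq0 N_sub _ w_inj w_out nb_w_step nb_N_sub j_range _ _ j_step
  x y [n [lam [X [Y [XY_feasible lam_ge0 lam_sum x_def y_def]]]]].
change (ineq_lhs e C i k U N t w j x y <= #|U|%:R).
have -> : ineq_lhs e C i k U N t w j x y = ineq_lhs e C i k U N t w j
    (fun v q => \sum_(l < n) lam l * (X l v q)%:~R) (fun v q => \sum_(l < n) lam l * (Y l v q)%:~R).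
  by apply: eq_ineq_lhs => // v q q_range; [apply: x_def | apply: y_def]; lia.
rewrite ineq_lhs_convex; apply: le_trans (_ : \sum_(l < n) lam l * #|U|%:R <= _).
  apply: ler_sum => l _; rewrite ler_wpM2l // -(raddf_ineq_lhs intr (X l) (Y l)).
  rewrite -(rmorph_nat intr) ler_int.
  exact: ineq_lhs_int_le e_simple (XY_feasible l) i_range k_range U_neq0 N_sub
    w_inj w_out nb_w_step nb_N_sub j_range j_step.
by rewrite -mulr_suml lam_sum mul1r.
Qed.
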